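(* For every $\mu\in\mathcal M_0(\mathbb Z)$ there exists $\mathbf r_\mu\in[0,1]^{\mathbb Z}$ such that the randomized Markovian stopping time $\tau(\mathbf r_\mu)$ solves the Skorokhod embedding problem in the filtration $\mathbb F^{S,\boldsymbol\xi}$: that is, $\tau(\mathbf r_\mu)<\infty$ a.s., $S_{\tau(\mathbf r_\mu)}\sim\mu$, and the stopped process $(S_{t\wedge\tau(\mathbf r_\mu)})_{t\ge0}$ is uniformly integrable.
   Context: Time is discrete, $t\in\{0,1,2,\dots\}$. $S=(S_t)_{t\ge0}$ is a simple symmetric random walk on $\mathbb Z$ with $S_0=0$. $\mathcal M_0(\mathbb Z)$ denotes the set of probability measures on $\mathbb Z$ with finite first moment and mean zero. A stopping time $\tau$ is called uniformly integrable (UI) if the stopped process $(S_{t\wedge\tau})_{t\ge0}$ is uniformly integrable. For a filtration $\mathbb F$ (with respect to which $S$ is adapted and $S_{t+1}-S_t$ is independent of $\mathcal F_t$), $\mathrm{SEP}(\mathbb F,\mu)$ denotes the set of $\mathbb F$-stopping times $\tau$ with $S_\tau\sim\mu$ and $\tau$ UI. Randomized Markovian stopping times: for $\mathbf r=(r_x)_{x\in\mathbb Z}\in[0,1]^{\mathbb Z}$, let $\boldsymbol\xi=\{\xi_{t,x}\}_{t\ge0,x\in\mathbb Z}$ be Bernoulli random variables, mutually independent and independent of $S$, with $\mathbb P(\xi_{t,x}=0)=r_x=1-\mathbb P(\xi_{t,x}=1)$, and set $\tau(\mathbf r):=\inf\{t\ge0:\xi_{t,S_t}=0\}$. This is a stopping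 time for the filtration $\mathbb F^{S,\boldsymbol\xi}=(\mathcal F^{S,\boldsymbol\xi}_t)_{t\ge 0}$, $\mathcal F^{S,\boldsymbol\xi}_t:=\sigma(S_u,\xi_{u,S_u}:u\le t)$. The law of $S_{\tau(\mathbf r)}$ depends only on $\mathbf r$. *)

From Stdlib Require Import Reals ZArith.
Open Scope R_scope.

(* Symmetric partial sum  sum_{k=-N}^{N} f k  over Z. *)
Definition zpart (f : Z -> R) (N : nat) : R :=
  sum_f_R0 (fun i => f (Z.of_nat i - Z.of_nat N)%Z) (2 * N).

(* sum over Z of f equals l (symmetric partial sums converge to l) *)
Definition zsum_cv (f : Z -> R) (l : R) : Prop := Un_cv (zpart f) l.

(* mu is in M_0(Z): a probability measure on Z (given by its mass function)
   with finite first moment and mean zero. *)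
Definition M0 (mu : Z -> R) : Prop :=
  (forall y, 0 <= mu y) /\ zsum_cv mu 1 /\
  (exists m, zsum_cv (fun y => Rabs (IZR y) * mu y) m) /\
  zsum_cv (fun y => IZR y * mu y) 0.

(* For r in [0,1]^Z, tau(r) = inf{t : xi_{t,S_t} = 0}, where at time t in
   state x one stops with probability r_x (independently of everything),
   and otherwise S moves by +-1 with probability 1/2 each.
   alive r n x = P(tau >= n, S_n = x)  (= P(tau > n-1, S_n = x)). *)
Fixpoint alive (r : Z -> R) (n : nat) (x : Z) : R :=
  match n with
  | O => if Z.eq_dec x 0 then 1 else 0
  | S m => (1 - r (x - 1)%Z) * alive r m (x - 1)%Z / 2
         + (1 - r (x + 1)%Z) * alive r m (x + 1)%Z / 2
  end.

(* P(tau = n, S_n = x) *)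
Definition stop_at (r : Z -> R) (n : nat) (x : Z) : R := alive r n x * r x.

(* P(tau >= n) = sum_x alive r n x; alive r n is supported in [-n, n]. *)
Definition tail (r : Z -> R) (n : nat) : R := zpart (alive r n) n.

(* tau(r) < infinity almost surely:  P(tau >= n) -> 0 *)
Definition finite_as (r : Z -> R) : Prop := Un_cv (tail r) 0.

(* P(S_tau = y, tau < infinity) = sum_n P(tau = n, S_n = y) = p *)
Definition law_Stau (r : Z -> R) (y : Z) (p : R) : Prop :=
  Un_cv (fun N => sum_f_R0 (fun n => stop_at r n y) N) p.

(* Law of S_{t /\ tau}: P(S_{t/\tau} = x)
   = sum_{n<=t} P(tau = n, S_n = x) + P(tau > t, S_t = x). *)
Definition law_stopped (r : Z -> R) (t : nat) (x : Z) : R :=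
  sum_f_R0 (fun n => stop_at r n x) t + alive r t x * (1 - r x).

(* E[ |S_{t/\tau}| ; |S_{t/\tau}| >= K ]  (support of S_{t/\tau} is in [-t,t]) *)
Definition ui_tail (r : Z -> R) (t : nat) (K : R) : R :=
  zpart (fun x => if Rle_dec K (Rabs (IZR x))
                  then Rabs (IZR x) * law_stopped r t x else 0) t.

(* (S_{t /\ tau})_{t >= 0} is uniformly integrable:
   lim_{K -> oo} sup_t E[|S_{t/\tau}|; |S_{t/\tau}| >= K] = 0 *)
Definition UI_stopped (r : Z -> R) : Prop :=
  forall eps, eps > 0 -> exists K, forall t, ui_tail r t K <= eps.

From Stdlib Require Import Reals ZArith Lia Lra.
Open Scope R_scope.

(* Let U z = sum_y mu y |y - z| be the potential of mu.  As mu is centred, U >= |.|, and its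
   discrete Laplacian is mu: (U (x-1) + U (x+1)) / 2 = U x + mu x.  Choose r with r g = mu for
   g := U - |.| + mu.  Then (1 - r) g = U - |.|, and the Laplacian identity says that g satisfies
   the recursion of the Green function G of the walk killed at rate r, with source at 0; hence
   G <= g, i.e. P(S_tau = x) = r x G x <= mu x.  By optional stopping for the submartingales
   |S - z|, E |S_{t /\ tau} - z| <= U z.  With z = 0 this gives tau < oo a.s. via Markov's
   inequality, with z = +-K it gives uniform integrability since U K + U (-K) - 2K -> 0, and
   conservation of mass upgrades r G <= mu to equality. *)

Lemma Un_cv_eventually (u v : nat -> R) (l : R) :
  (exists N0, forall n, (n >= N0)%nat -> u n = v n) -> Un_cv u l -> Un_cv v l.
Proof.
  intros [N0 Huv] Hu eps Heps. destruct (Hu eps Heps) as [N HN].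
  exists (Nat.max N N0). intros n Hn. rewrite <- Huv by lia. apply HN; lia.
Qed.

Lemma Un_cv_const (c : R) : Un_cv (fun _ => c) c.
Proof.
  intros eps Heps; exists 0%nat; intros n _.
  unfold R_dist; rewrite Rminus_diag, Rabs_R0; lra.
Qed.

Lemma sum_f_R0_le_mono (a : nat -> R) (n m : nat) :
  (forall k, 0 <= a k) -> (n <= m)%nat -> sum_f_R0 a n <= sum_f_R0 a m.
Proof.
  intros Ha Hnm; induction Hnm; [lra|].
  rewrite tech5; pose proof (Ha (S m)); lra.
Qed.

Lemma bounded_series_terms_cv0 (a : nat -> R) (B : R) :
  (forall n, 0 <= a n) -> (forall N, sum_f_R0 a N <= B) -> Un_cv a 0.
Proof.
  intros Ha HB.
  assert (Hgrow : Un_growing (sum_f_R0 a)).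
  { intros n; rewrite tech5; pose proof (Ha (S n)); lra. }
  assert (Hub : has_ub (sum_f_R0 a)) by (exists B; intros x [n ->]; auto).
  destruct (growing_cv _ Hgrow Hub) as [l Hl].
  intros eps Heps. destruct (Hl (eps / 2)) as [N HN]; [lra|].
  exists (S N); intros [|n] Hn; [lia|].
  unfold R_dist in *.
  pose proof (HN (S n) ltac:(lia)) as HSn. pose proof (HN n ltac:(lia)) as Hn'.
  rewrite tech5 in HSn. rewrite Rminus_0_r.
  apply Rabs_def2 in HSn; apply Rabs_def2 in Hn'. apply Rabs_def1; lra.
Qed.

Definition zdelta (y z : Z) : R := if Z.eq_dec y z then 1 else 0.

Lemma zdelta_sym (y z : Z) : zdelta y z = zdelta z y.
Proof. unfold zdelta; destruct (Z.eq_dec y z), (Z.eq_dec z y); lia || reflexivity. Qed.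

Definition zwindow (K : nat) (f : Z -> R) (y : Z) : R :=
  if Z_le_dec (Z.abs y) (Z.of_nat K) then f y else 0.

Lemma zpart_ext f g N :
  (forall y, (- Z.of_nat N <= y <= Z.of_nat N)%Z -> f y = g y) -> zpart f N = zpart g N.
Proof. intros H; unfold zpart; apply sum_eq; intros i Hi; apply H; lia. Qed.

Lemma zpart_le f g N :
  (forall y, (- Z.of_nat N <= y <= Z.of_nat N)%Z -> f y <= g y) -> zpart f N <= zpart g N.
Proof. intros H; unfold zpart; apply sum_Rle; intros i Hi; apply H; lia. Qed.

Lemma zpart_plus f g N : zpart (fun y => f y + g y) N = zpart f N + zpart g N.
Proof. apply sum_plus. Qed.

Lemma zpart_minus f g N : zpart (fun y => f y - g y) N = zpart f N - zpart g N.
Proof. apply minus_sum. Qed.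

Lemma zpart_scal c f N : zpart (fun y => c * f y) N = c * zpart f N.
Proof. unfold zpart; rewrite scal_sum; apply sum_eq; intros; ring. Qed.

Lemma zpart_zero N : zpart (fun _ => 0) N = 0.
Proof. apply sum_eq_R0; auto. Qed.

Lemma zpart_ge0 f N : (forall y, 0 <= f y) -> 0 <= zpart f N.
Proof. intros H; apply cond_pos_sum; auto. Qed.

Lemma zpart_abs_le f N : Rabs (zpart f N) <= zpart (fun y => Rabs (f y)) N.
Proof. apply sum_f_R0_triangle. Qed.

Lemma zpart_S f N :
  zpart f (S N) = zpart f N + f (- (Z.of_nat N + 1))%Z + f (Z.of_nat N + 1)%Z.
Proof.
  unfold zpart. replace (2 * S N)%nat with (S (S (2 * N))) by lia.
  rewrite tech5, (decomp_sum _ (S (2 * N))) by lia. simpl pred.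
  rewrite (sum_eq _ (fun i => f (Z.of_nat i - Z.of_nat N)%Z)) by (intros; f_equal; lia).
  replace (Z.of_nat 0 - Z.of_nat (S N))%Z with (- (Z.of_nat N + 1))%Z by lia.
  replace (Z.of_nat (S (S (2 * N))) - Z.of_nat (S N))%Z with (Z.of_nat N + 1)%Z by lia.
  replace (N + (N + 0))%nat with (2 * N)%nat by lia. ring.
Qed.

Lemma zpart_shift_succ f N :
  zpart (fun y => f (y + 1)%Z) N = zpart f N - f (- Z.of_nat N)%Z + f (Z.of_nat N + 1)%Z.
Proof.
  set (a := fun j => f (Z.of_nat j - Z.of_nat N)%Z).
  assert (Hshift : sum_f_R0 (fun i => a (S i)) (2 * N) = sum_f_R0 a (S (2 * N)) - a 0%nat).
  { rewrite (decomp_sum a (S (2 * N))) by lia. cbn [pred]. ring. }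
  unfold zpart. rewrite (sum_eq _ (fun i => a (S i))) by (intros; unfold a; f_equal; lia).
  rewrite Hshift, tech5. unfold a.
  replace (Z.of_nat 0 - Z.of_nat N)%Z with (- Z.of_nat N)%Z by lia.
  replace (Z.of_nat (S (2 * N)) - Z.of_nat N)%Z with (Z.of_nat N + 1)%Z by lia.
  ring.
Qed.

Lemma zpart_shift_pred f N :
  zpart (fun y => f (y - 1)%Z) N = zpart f N - f (Z.of_nat N) + f (- Z.of_nat N - 1)%Z.
Proof.
  pose proof (zpart_shift_succ (fun y => f (y - 1)%Z) N) as H.
  rewrite (zpart_ext (fun y => f (y + 1 - 1)%Z) f) in H by (intros; f_equal; lia).
  replace (Z.of_nat N + 1 - 1)%Z with (Z.of_nat N) in H by lia.
  lra.
Qed.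

Lemma zpart_supported f N M :
  (forall y, (Z.of_nat N < Z.abs y)%Z -> f y = 0) -> (N <= M)%nat -> zpart f M = zpart f N.
Proof.
  intros Hf HNM. induction HNM as [|M HNM IH]; auto.
  rewrite zpart_S, IH, !Hf by lia. ring.
Qed.

Lemma zpart_le_mono f N M : (forall y, 0 <= f y) -> (N <= M)%nat -> zpart f N <= zpart f M.
Proof.
  intros Hf HNM. induction HNM as [|M HNM IH]; [lra|].
  rewrite zpart_S. pose proof (Hf (- (Z.of_nat M + 1))%Z). pose proof (Hf (Z.of_nat M + 1)%Z).
  lra.
Qed.

Lemma zpart_growing f : (forall y, 0 <= f y) -> Un_growing (zpart f).
Proof. intros Hf n; apply zpart_le_mono; auto. Qed.

Lemma zpart_delta f z N : (Z.abs z <= Z.of_nat N)%Z -> zpart (fun y => f y * zdelta y z) N = f z.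
Proof.
  intros Hz. rewrite (zpart_supported _ (Z.to_nat (Z.abs z)) N); cycle 1.
  { intros y Hy. unfold zdelta. destruct (Z.eq_dec y z); [lia|ring]. }
  { lia. }
  clear Hz. set (K := Z.to_nat (Z.abs z)).
  assert (HK : (Z.abs z = Z.of_nat K)%Z) by (unfold K; lia). clearbody K.
  destruct K as [|K].
  - unfold zpart, zdelta; simpl. destruct (Z.eq_dec 0 z); [subst; ring | lia].
  - rewrite zpart_S, (zpart_ext _ (fun _ => 0)), zpart_zero.
    + unfold zdelta. destruct (Z.eq_dec (- (Z.of_nat K + 1)) z), (Z.eq_dec (Z.of_nat K + 1) z);
        subst; lia || ring.
    + intros y Hy. unfold zdelta. destruct (Z.eq_dec y z); [lia|ring].
Qed.

Lemma zpart_delta_out f z N : (Z.of_nat N < Z.abs z)%Z -> zpart (fun y => f y * zdelta y z) N = 0.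
Proof.
  intros Hz. rewrite (zpart_ext _ (fun _ => 0)) by
    (intros y Hy; unfold zdelta; destruct (Z.eq_dec y z); [lia|ring]).
  apply zpart_zero.
Qed.

Lemma zpart_ge_term f z N :
  (forall y, 0 <= f y) -> (Z.abs z <= Z.of_nat N)%Z -> f z <= zpart f N.
Proof.
  intros Hf Hz. rewrite <- (zpart_delta f z N Hz). apply zpart_le.
  intros y _. unfold zdelta. destruct (Z.eq_dec y z); pose proof (Hf y); lra.
Qed.

Lemma zpart_window f K M : (K <= M)%nat -> zpart (zwindow K f) M = zpart f K.
Proof.
  intros HKM. rewrite (zpart_supported _ K M); [|intros y Hy; unfold zwindow | exact HKM].
  2: destruct Z_le_dec; [lia|reflexivity].
  apply zpart_ext. intros y Hy. unfold zwindow. destruct Z_le_dec; [reflexivity|lia].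
Qed.

Lemma zpart_window_le f K N : (forall y, 0 <= f y) -> zpart (zwindow K f) N <= zpart f K.
Proof.
  intros Hf. rewrite <- (zpart_window f K (Nat.max N K)) by lia.
  apply zpart_le_mono; [|lia].
  intros y; unfold zwindow; destruct Z_le_dec; [apply Hf|lra].
Qed.

Definition dist (a b : Z) : R := Rabs (IZR a - IZR b).

Lemma dist_sym (a b : Z) : dist a b = dist b a.
Proof. unfold dist. rewrite <- Rabs_Ropp. f_equal. ring. Qed.

Lemma dist_0_r (a : Z) : dist a 0 = Rabs (IZR a).
Proof. unfold dist. f_equal. simpl. ring. Qed.

Lemma dist_laplacian (a b : Z) : (dist (a - 1) b + dist (a + 1) b) / 2 - dist a b = zdelta a b.
Proof.
  unfold dist, zdelta. rewrite minus_IZR, plus_IZR.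
  destruct (Z.eq_dec a b) as [->|].
  - unfold Rabs; repeat destruct Rcase_abs; lra.
  - assert (IZR a + 1 <= IZR b \/ IZR b + 1 <= IZR a) as [|].
    { rewrite <- !plus_IZR. destruct (Z_lt_le_dec a b); [left|right]; apply IZR_le; lia. }
    all: unfold Rabs; repeat destruct Rcase_abs; lra.
Qed.

Lemma dist_nat_pm (y : Z) (K : nat) :
  dist y (Z.of_nat K) + dist y (- Z.of_nat K) = Rabs (IZR y - INR K) + Rabs (IZR y + INR K).
Proof.
  unfold dist. rewrite opp_IZR, <- INR_IZR_INZ. f_equal. f_equal. ring.
Qed.

Lemma abs_pair_ge0 (a K : R) : 0 <= Rabs (a - K) + Rabs (a + K) - 2 * K.
Proof. unfold Rabs; repeat destruct Rcase_abs; lra. Qed.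

Lemma abs_pair_small (a K : R) : Rabs a <= K -> Rabs (a - K) + Rabs (a + K) - 2 * K = 0.
Proof. unfold Rabs; repeat destruct Rcase_abs; lra. Qed.

Lemma abs_pair_le (a K : R) : 0 <= K -> Rabs (a - K) + Rabs (a + K) - 2 * K <= 2 * Rabs a.
Proof. unfold Rabs; repeat destruct Rcase_abs; lra. Qed.

Lemma abs_pair_large (a K : R) :
  2 * K <= Rabs a -> Rabs a <= Rabs (a - K) + Rabs (a + K) - 2 * K.
Proof. unfold Rabs; repeat destruct Rcase_abs; lra. Qed.

(** * The walk stopped at rate r *)

Section StoppedWalk.

Variable r : Z -> R.
Hypothesis r_01 : forall x, 0 <= r x <= 1.

Lemma alive_0 (x : Z) : alive r 0 x = zdelta x 0.
Proof. reflexivity. Qed.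

Lemma alive_S (n : nat) (x : Z) : alive r (S n) x =
  (1 - r (x - 1)%Z) * alive r n (x - 1)%Z / 2 + (1 - r (x + 1)%Z) * alive r n (x + 1)%Z / 2.
Proof. reflexivity. Qed.

Lemma alive_ge0 (n : nat) (x : Z) : 0 <= alive r n x.
Proof.
  revert x; induction n as [|n IH]; intros x.
  - rewrite alive_0; unfold zdelta; destruct (Z.eq_dec x 0); lra.
  - rewrite alive_S. pose proof (r_01 (x - 1)%Z); pose proof (r_01 (x + 1)%Z).
    pose proof (IH (x - 1)%Z); pose proof (IH (x + 1)%Z).
    assert (0 <= (1 - r (x - 1)%Z) * alive r n (x - 1)%Z) by (apply Rmult_le_pos; lra).
    assert (0 <= (1 - r (x + 1)%Z) * alive r n (x + 1)%Z) by (apply Rmult_le_pos; lra).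
    lra.
Qed.

Lemma alive_supported (n : nat) (x : Z) : (Z.of_nat n < Z.abs x)%Z -> alive r n x = 0.
Proof.
  revert x; induction n as [|n IH]; intros x Hx.
  - rewrite alive_0; unfold zdelta; destruct (Z.eq_dec x 0); [lia|ring].
  - rewrite alive_S, !IH by lia. lra.
Qed.

(* P(tau > t, S_t = y): the mass that moves on at time t *)
Definition survive (t : nat) (y : Z) : R := (1 - r y) * alive r t y.

Lemma survive_supported (t : nat) (y : Z) : (Z.of_nat t < Z.abs y)%Z -> survive t y = 0.
Proof. intros Hy; unfold survive; rewrite alive_supported by exact Hy; ring. Qed.

Definition green (N : nat) (x : Z) : R := sum_f_R0 (fun n => alive r n x) N.

Lemma green_S (N : nat) (x : Z) : green (S N) x = zdelta x 0 +
  ((1 - r (x - 1)%Z) * green N (x - 1)%Z + (1 - r (x + 1)%Z) * green N (x + 1)%Z) / 2.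
Proof.
  induction N as [|N IH].
  - unfold green. rewrite tech5. cbn [sum_f_R0]. rewrite alive_0, alive_S. field.
  - unfold green in *. rewrite (tech5 (fun n => alive r n x)), IH,
      (tech5 (fun n => alive r n (x - 1)%Z)), (tech5 (fun n => alive r n (x + 1)%Z)),
      (alive_S (S N) x). field.
Qed.

Lemma stopped_sum_green (N : nat) (y : Z) :
  sum_f_R0 (fun n => stop_at r n y) N = r y * green N y.
Proof. unfold stop_at, green; rewrite scal_sum; reflexivity. Qed.

Lemma law_stopped_green (t : nat) (y : Z) : law_stopped r t y = r y * green t y + survive t y.
Proof. unfold law_stopped, survive. rewrite stopped_sum_green. ring. Qed.

Lemma law_stopped_supported (t : nat) (y : Z) :
  (Z.of_nat t < Z.abs y)%Z -> law_stopped r t y = 0.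
Proof.
  intros Hy. rewrite law_stopped_green, survive_supported by exact Hy.
  unfold green. rewrite sum_eq_R0; [ring|]. intros n Hn. apply alive_supported. lia.
Qed.

Lemma green_ge0 (N : nat) (x : Z) : 0 <= green N x.
Proof. apply cond_pos_sum; intros; apply alive_ge0. Qed.

Lemma law_stopped_ge0 (t : nat) (y : Z) : 0 <= law_stopped r t y.
Proof.
  rewrite law_stopped_green. unfold survive.
  pose proof (r_01 y). pose proof (green_ge0 t y). pose proof (alive_ge0 t y).
  assert (0 <= r y * green t y) by (apply Rmult_le_pos; lra).
  assert (0 <= (1 - r y) * alive r t y) by (apply Rmult_le_pos; lra). lra.
Qed.

Lemma alive_le_law_stopped (t : nat) (y : Z) : alive r t y <= law_stopped r t y.
Proof.
  unfold law_stopped. destruct t as [|t].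
  - cbn [sum_f_R0]. unfold stop_at. lra.
  - rewrite tech5. unfold stop_at. rewrite <- scal_sum, Rmult_comm.
    pose proof (r_01 y). pose proof (green_ge0 t y).
    assert (0 <= r y * green t y) by (apply Rmult_le_pos; lra). unfold green in *. lra.
Qed.

Lemma law_stopped_S (t : nat) (y : Z) : law_stopped r (S t) y =
  law_stopped r t y - survive t y + (survive t (y - 1)%Z + survive t (y + 1)%Z) / 2.
Proof. unfold law_stopped, survive, stop_at. rewrite tech5, !alive_S. field. Qed.

(* E[phi(S_{t /\ tau})] *)
Definition expect_stopped (t : nat) (phi : Z -> R) : R :=
  zpart (fun y => law_stopped r t y * phi y) t.

Lemma expect_stopped_S (t : nat) (phi : Z -> R) : expect_stopped (S t) phi =
  expect_stopped t phi
  + zpart (fun y => survive t y * ((phi (y - 1)%Z + phi (y + 1)%Z) / 2 - phi y)) (S t).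
Proof.
  set (b := survive t).
  set (F1 := fun y => b y * phi (y + 1)%Z).
  set (F2 := fun y => b y * phi (y - 1)%Z).
  assert (Hlhs : expect_stopped (S t) phi =
     zpart (fun y => law_stopped r t y * phi y) (S t) - zpart (fun y => b y * phi y) (S t)
     + / 2 * zpart (fun y => F1 (y - 1)%Z) (S t) + / 2 * zpart (fun y => F2 (y + 1)%Z) (S t)).
  { unfold expect_stopped. rewrite <- !zpart_scal, <- zpart_minus, <- !zpart_plus.
    apply zpart_ext. intros y _. rewrite law_stopped_S. unfold F1, F2, b.
    replace (y - 1 + 1)%Z with y by lia. replace (y + 1 - 1)%Z with y by lia. field. }
  assert (Hrhs : zpart (fun y => b y * ((phi (y - 1)%Z + phi (y + 1)%Z) / 2 - phi y)) (S t) =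
     / 2 * zpart F2 (S t) + / 2 * zpart F1 (S t) - zpart (fun y => b y * phi y) (S t)).
  { rewrite <- !zpart_scal, <- zpart_plus, <- zpart_minus. apply zpart_ext.
    intros y _. unfold F1, F2. field. }
  rewrite Hlhs, Hrhs, zpart_shift_pred, zpart_shift_succ.
  unfold F1, F2, b. rewrite !survive_supported by lia.
  rewrite (zpart_supported (fun y => law_stopped r t y * phi y) t (S t)); [unfold expect_stopped; ring| |lia].
  intros y Hy; rewrite law_stopped_supported by exact Hy; ring.
Qed.

Lemma expect_stopped_one (t : nat) : expect_stopped t (fun _ => 1) = 1.
Proof.
  induction t as [|t IH].
  - unfold expect_stopped, zpart, law_stopped, stop_at. simpl. ring.
  - rewrite expect_stopped_S, IH, (zpart_ext _ (fun _ => 0)), zpart_zero by (intros; field).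
    ring.
Qed.

Lemma expect_stopped_dist (t : nat) (z : Z) :
  expect_stopped t (fun y => dist y z) + survive t z = Rabs (IZR z) + (1 - r z) * green t z.
Proof.
  induction t as [|t IH].
  - unfold expect_stopped, zpart, survive, law_stopped, stop_at, green. simpl.
    rewrite dist_sym, dist_0_r. ring.
  - rewrite expect_stopped_S.
    rewrite (zpart_ext _ (fun y => survive t y * zdelta y z)) by (intros; rewrite dist_laplacian; ring).
    assert (Hdelta : zpart (fun y => survive t y * zdelta y z) (S t) = survive t z).
    { destruct (Z_le_gt_dec (Z.abs z) (Z.of_nat (S t))).
      - apply zpart_delta; assumption.
      - rewrite zpart_delta_out, survive_supported by lia. reflexivity. }
    rewrite Hdelta. unfold green, survive in *. rewrite tech5, Rmult_plus_distr_l. lra.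
Qed.

Lemma alive_cv0 (x : Z) (B : R) : (forall N, green N x <= B) -> Un_cv (fun t => alive r t x) 0.
Proof. apply bounded_series_terms_cv0. intros; apply alive_ge0. Qed.

Lemma zpart_alive_cv0 (B : Z -> R) :
  (forall N x, green N x <= B x) -> forall L, Un_cv (fun t => zpart (alive r t) L) 0.
Proof.
  intros HB L. induction L as [|L IH].
  - apply Un_cv_eventually with (fun t => alive r t 0%Z); [exists 0%nat; reflexivity|].
    apply (alive_cv0 0 (B 0%Z)). intros; apply HB.
  - apply Un_cv_eventually with (fun t => zpart (alive r t) L + alive r t (- (Z.of_nat L + 1))%Z
                                        + alive r t (Z.of_nat L + 1)%Z).
    { exists 0%nat. intros; rewrite zpart_S; reflexivity. }
    replace 0 with (0 + 0 + 0) by ring.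
    apply CV_plus; [apply CV_plus|]; [exact IH| |]; eapply alive_cv0; intros; apply HB.
Qed.

End StoppedWalk.

(** * The potential of a centred law *)

Section Potential.

Variables (mu : Z -> R) (m : R).
Hypotheses (mu_ge0 : forall y, 0 <= mu y) (mu_mass : zsum_cv mu 1)
  (mu_moment : zsum_cv (fun y => Rabs (IZR y) * mu y) m)
  (mu_mean : zsum_cv (fun y => IZR y * mu y) 0).

Let abs_moment (y : Z) : R := Rabs (IZR y) * mu y.

Lemma abs_moment_ge0 (y : Z) : 0 <= abs_moment y.
Proof. apply Rmult_le_pos; [apply Rabs_pos|apply mu_ge0]. Qed.

Lemma zpart_mass_le (N : nat) : zpart mu N <= 1.
Proof. apply growing_ineq; [apply zpart_growing, mu_ge0|exact mu_mass]. Qed.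

Lemma zpart_moment_le (N : nat) : zpart abs_moment N <= m.
Proof. apply growing_ineq; [apply zpart_growing, abs_moment_ge0|exact mu_moment]. Qed.

Definition potential_partial (z : Z) (N : nat) : R := zpart (fun y => mu y * dist y z) N.

Lemma potential_partial_cv (z : Z) : {l | Un_cv (potential_partial z) l}.
Proof.
  apply growing_cv.
  - apply zpart_growing. intros y; apply Rmult_le_pos; [apply mu_ge0|apply Rabs_pos].
  - exists (m + Rabs (IZR z)). intros x [N ->]. unfold potential_partial.
    apply Rle_trans with (zpart abs_moment N + Rabs (IZR z) * zpart mu N).
    + rewrite <- zpart_scal, <- zpart_plus. apply zpart_le. intros y _. unfold abs_moment, dist.
      pose proof (Rabs_triang (IZR y) (- IZR z)) as Htri. rewrite Rabs_Ropp in Htri.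
      pose proof (mu_ge0 y). unfold Rminus. nra.
    + pose proof (zpart_moment_le N); pose proof (zpart_mass_le N); pose proof (Rabs_pos (IZR z)).
      nra.
Qed.

Lemma potential_exists : exists U : Z -> R, forall z, Un_cv (potential_partial z) (U z).
Proof. exists (fun z => proj1_sig (potential_partial_cv z)). intros z. apply proj2_sig. Qed.

Variable U : Z -> R.
Hypothesis U_cv : forall z, Un_cv (potential_partial z) (U z).

(* Jensen: the centred law satisfies |sum (y - z) mu y| <= sum |y - z| mu y. *)
Lemma potential_ge_abs (z : Z) : Rabs (IZR z) <= U z.
Proof.
  set (lin := fun N => zpart (fun y => IZR y * mu y) N - IZR z * zpart mu N).
  assert (Hlin : Un_cv lin (0 - IZR z * 1)).
  { apply CV_minus; [exact mu_mean|]. apply CV_mult; [apply Un_cv_const|exact mu_mass]. }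
  replace (Rabs (IZR z)) with (Rabs (0 - IZR z * 1)) by (rewrite <- Rabs_Ropp; f_equal; ring).
  apply (@Rle_cv_lim (fun N => Rabs (lin N)) (potential_partial z)); [|apply cv_cvabs, Hlin|apply U_cv].
  intros N. unfold lin, potential_partial. rewrite <- zpart_scal, <- zpart_minus.
  eapply Rle_trans; [apply zpart_abs_le|]. apply zpart_le. intros y _. unfold dist.
  rewrite <- Rmult_minus_distr_r, Rabs_mult, (Rabs_pos_eq (mu y)) by apply mu_ge0.
  right; ring.
Qed.

Lemma potential_laplacian (x : Z) : (U (x - 1)%Z + U (x + 1)%Z) / 2 = U x + mu x.
Proof.
  apply (UL_sequence (fun N => (potential_partial (x - 1) N + potential_partial (x + 1) N) / 2)).
  - unfold Rdiv. apply CV_mult; [apply CV_plus; apply U_cv|apply Un_cv_const].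
  - apply Un_cv_eventually with (fun N => potential_partial x N + mu x).
    2: apply CV_plus; [apply U_cv|apply Un_cv_const].
    exists (Z.to_nat (Z.abs x)). intros N HN. unfold potential_partial.
    rewrite <- (zpart_delta mu x N) by lia.
    rewrite <- !zpart_plus. unfold Rdiv. rewrite Rmult_comm, <- zpart_scal.
    apply zpart_ext. intros y _.
    rewrite (dist_sym y x), (dist_sym y (x - 1)), (dist_sym y (x + 1)), zdelta_sym.
    rewrite <- (dist_laplacian x y). field.
Qed.

Lemma potential_partial_pair_le (K N : nat) :
  potential_partial (Z.of_nat K) N + potential_partial (- Z.of_nat K) N - 2 * INR K * zpart mu N
  <= 2 * (zpart abs_moment (Nat.max N K) - zpart abs_moment K).
Proof.
  pose proof (pos_INR K) as HK.
  unfold potential_partial. rewrite <- zpart_scal, <- zpart_plus, <- zpart_minus.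
  apply Rle_trans with (2 * zpart (fun y => abs_moment y - zwindow K abs_moment y) N).
  - rewrite <- zpart_scal. apply zpart_le. intros y _.
    replace (mu y * dist y (Z.of_nat K) + mu y * dist y (- Z.of_nat K) - 2 * INR K * mu y)
      with (mu y * (Rabs (IZR y - INR K) + Rabs (IZR y + INR K) - 2 * INR K))
      by (rewrite <- dist_nat_pm; ring).
    unfold zwindow, abs_moment. destruct Z_le_dec as [Hy|Hy].
    + rewrite abs_pair_small; [lra|]. rewrite <- abs_IZR, INR_IZR_INZ. apply IZR_le; lia.
    + pose proof (abs_pair_le (IZR y) (INR K) HK). pose proof (mu_ge0 y). nra.
  - rewrite <- (zpart_window abs_moment K (Nat.max N K)), <- zpart_minus by lia.
    apply Rmult_le_compat_l; [lra|]. apply zpart_le_mono; [|lia].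
    intros y. unfold zwindow. destruct Z_le_dec; [lra|]. pose proof (abs_moment_ge0 y). lra.
Qed.

Lemma potential_pair_tail (eps : R) : eps > 0 ->
  exists K : nat, U (Z.of_nat K) + U (- Z.of_nat K)%Z - 2 * INR K <= eps.
Proof.
  intros Heps. destruct (mu_moment (eps / 2)) as [K HK]; [lra|]. exists K.
  assert (Hcv : Un_cv (fun N => potential_partial (Z.of_nat K) N
                       + potential_partial (- Z.of_nat K) N - 2 * INR K * zpart mu N)
                      (U (Z.of_nat K) + U (- Z.of_nat K)%Z - 2 * INR K * 1)).
  { apply CV_minus; [apply CV_plus; apply U_cv|apply CV_mult; [apply Un_cv_const|exact mu_mass]]. }
  assert (Hbound : forall N, potential_partial (Z.of_nat K) N + potential_partial (- Z.of_nat K) N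
                             - 2 * INR K * zpart mu N <= eps).
  { intros N. eapply Rle_trans; [apply potential_partial_pair_le|].
    pose proof (zpart_moment_le (Nat.max N K)).
    pose proof (HK K (Nat.le_refl K)) as HKK. unfold R_dist in HKK. apply Rabs_def2 in HKK.
    unfold abs_moment in *. lra. }
  pose proof (Rle_cv_lim Hbound Hcv (Un_cv_const eps)). lra.
Qed.

End Potential.

(** * The stopping rates *)

Section Construction.

Variables mu U : Z -> R.
Hypotheses (mu_ge0 : forall y, 0 <= mu y) (mu_mass_le : forall N, zpart mu N <= 1)
  (U_ge_abs : forall z, Rabs (IZR z) <= U z)
  (U_laplacian : forall x, (U (x - 1)%Z + U (x + 1)%Z) / 2 = U x + mu x)
  (U_pair_tail : forall eps, eps > 0 ->
     exists K : nat, U (Z.of_nat K) + U (- Z.of_nat K)%Z - 2 * INR K <= eps).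

Definition occupation (z : Z) : R := U z - Rabs (IZR z) + mu z.

(* Where [occupation z <= 0] we have [mu z = 0] and [U z = |z|]; any rate works there. *)
Definition stop_rate (z : Z) : R :=
  if Rle_dec (occupation z) 0 then 1 else mu z / occupation z.

Local Notation r := stop_rate.

Lemma occupation_le0 (z : Z) : occupation z <= 0 -> U z = Rabs (IZR z) /\ mu z = 0.
Proof. unfold occupation. pose proof (U_ge_abs z). pose proof (mu_ge0 z). lra. Qed.

Lemma stop_rate_01 (z : Z) : 0 <= r z <= 1.
Proof.
  unfold r. destruct (Rle_dec (occupation z) 0) as [Hz|Hz]; [lra|].
  pose proof (mu_ge0 z). pose proof (U_ge_abs z). unfold occupation in *. split.
  - apply Rmult_le_pos; [lra|]. left; apply Rinv_0_lt_compat; lra.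
  - apply Rmult_le_reg_r with (U z - Rabs (IZR z) + mu z); [lra|].
    unfold Rdiv; rewrite Rmult_assoc, Rinv_l by lra. lra.
Qed.

Lemma stop_rate_occupation (z : Z) : r z * occupation z = mu z.
Proof.
  unfold r. destruct (Rle_dec (occupation z) 0) as [Hz|Hz].
  - destruct (occupation_le0 z Hz) as [HU Hmu]. unfold occupation. rewrite HU, Hmu. ring.
  - field. lra.
Qed.

Lemma survive_rate_occupation (z : Z) : (1 - r z) * occupation z = U z - Rabs (IZR z).
Proof.
  rewrite Rmult_minus_distr_r, stop_rate_occupation. unfold occupation. ring.
Qed.

Lemma occupation_recursion (x : Z) : occupation x = zdelta x 0
  + ((1 - r (x - 1)%Z) * occupation (x - 1)%Z
     + (1 - r (x + 1)%Z) * occupation (x + 1)%Z) / 2.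
Proof.
  rewrite !survive_rate_occupation. unfold occupation.
  rewrite <- (dist_laplacian x 0), <- !dist_0_r. pose proof (U_laplacian x). lra.
Qed.

Lemma green_le_occupation (N : nat) (x : Z) : green r N x <= occupation x.
Proof.
  revert x; induction N as [|N IH]; intros x.
  - unfold green; cbn [sum_f_R0]. rewrite alive_0, occupation_recursion, !survive_rate_occupation.
    pose proof (U_ge_abs (x - 1)%Z); pose proof (U_ge_abs (x + 1)%Z). lra.
  - rewrite green_S, occupation_recursion.
    pose proof (stop_rate_01 (x - 1)%Z); pose proof (stop_rate_01 (x + 1)%Z).
    assert ((1 - r (x - 1)%Z) * green r N (x - 1)%Z
            <= (1 - r (x - 1)%Z) * occupation (x - 1)%Z)
      by (apply Rmult_le_compat_l; [lra|apply IH]).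
    assert ((1 - r (x + 1)%Z) * green r N (x + 1)%Z
            <= (1 - r (x + 1)%Z) * occupation (x + 1)%Z)
      by (apply Rmult_le_compat_l; [lra|apply IH]).
    lra.
Qed.

Lemma expect_stopped_dist_le (t : nat) (z : Z) :
  expect_stopped r t (fun y => dist y z) <= U z.
Proof.
  pose proof (expect_stopped_dist r t z) as Hd. unfold survive in Hd.
  pose proof (stop_rate_01 z). pose proof (alive_ge0 r stop_rate_01 t z).
  assert ((1 - r z) * green r t z <= (1 - r z) * occupation z)
    by (apply Rmult_le_compat_l; [lra|apply green_le_occupation]).
  assert (0 <= (1 - r z) * alive r t z) by (apply Rmult_le_pos; lra).
  rewrite survive_rate_occupation in *. lra.
Qed.

(* Markov's inequality for |S_{t /\ tau}|, whose mean is at most U 0. *)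
Lemma tail_le (t L : nat) :
  tail r t <= zpart (alive r t) L + U 0%Z / (INR L + 1).
Proof.
  assert (HL : 0 < INR L + 1) by (pose proof (pos_INR L); lra).
  apply Rle_trans with (zpart (zwindow L (alive r t)) t
                        + / (INR L + 1) * expect_stopped r t (fun y => dist y 0)).
  - unfold tail, expect_stopped. rewrite <- zpart_scal, <- zpart_plus. apply zpart_le. intros y _.
    pose proof (alive_ge0 r stop_rate_01 t y). pose proof (alive_le_law_stopped r stop_rate_01 t y).
    pose proof (law_stopped_ge0 r stop_rate_01 t y) as Hls.
    assert (0 <= / (INR L + 1) * (law_stopped r t y * dist y 0)).
    { apply Rmult_le_pos; [left; apply Rinv_0_lt_compat; lra|].
      apply Rmult_le_pos; [lra|apply Rabs_pos]. }
    unfold zwindow. destruct Z_le_dec as [Hy|Hy]; [lra|].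
    assert (Hfar : INR L + 1 <= dist y 0).
    { rewrite dist_0_r, <- abs_IZR, INR_IZR_INZ, <- plus_IZR. apply IZR_le. lia. }
    assert (1 <= dist y 0 / (INR L + 1)).
    { apply Rmult_le_reg_r with (INR L + 1); [lra|].
      unfold Rdiv; rewrite Rmult_assoc, Rinv_l by lra. lra. }
    replace (/ (INR L + 1) * (law_stopped r t y * dist y 0))
      with (law_stopped r t y * (dist y 0 / (INR L + 1))) by (field; lra).
    nra.
  - pose proof (zpart_window_le (alive r t) L t (alive_ge0 r stop_rate_01 t)).
    pose proof (expect_stopped_dist_le t 0).
    assert (/ (INR L + 1) * expect_stopped r t (fun y => dist y 0) <= U 0%Z / (INR L + 1)).
    { rewrite Rmult_comm. apply Rmult_le_compat_r; [left; apply Rinv_0_lt_compat|]; lra. }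
    lra.
Qed.

Lemma stop_rate_finite_as : finite_as r.
Proof.
  intros eps Heps.
  assert (HU0 : 0 <= U 0%Z) by (pose proof (U_ge_abs 0%Z); pose proof (Rabs_pos (IZR 0)); lra).
  destruct (INR_archimed (eps / 2) (U 0%Z) ltac:(lra)) as [L HLa].
  destruct (zpart_alive_cv0 r stop_rate_01 occupation green_le_occupation L (eps / 2))
    as [T HT]; [lra|].
  exists T; intros t Ht. unfold R_dist. rewrite Rminus_0_r.
  pose proof (HT t Ht) as Hwin. unfold R_dist in Hwin. rewrite Rminus_0_r in Hwin.
  apply Rabs_def2 in Hwin.
  pose proof (tail_le t L).
  assert (0 <= tail r t) by (apply zpart_ge0, alive_ge0, stop_rate_01).
  assert (U 0%Z / (INR L + 1) < eps / 2).
  { pose proof (pos_INR L). apply Rmult_lt_reg_r with (INR L + 1); [lra|].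
    unfold Rdiv; rewrite Rmult_assoc, Rinv_l by lra. nra. }
  rewrite Rabs_right by lra. lra.
Qed.

(* The stopped mass r G_t is at most mu and misses at most P(tau >= t) in total. *)
Lemma stop_rate_law (y : Z) : law_Stau r y (mu y).
Proof.
  assert (Hle : forall N z, r z * green r N z <= mu z).
  { intros N z. rewrite <- stop_rate_occupation.
    apply Rmult_le_compat_l; [apply stop_rate_01|apply green_le_occupation]. }
  intros eps Heps.
  destruct (stop_rate_finite_as eps Heps) as [T HT].
  set (t := Nat.max T (Z.to_nat (Z.abs y))).
  assert (Htail : tail r t < eps).
  { pose proof (HT t ltac:(unfold t; lia)) as H. unfold R_dist in H. rewrite Rminus_0_r in H.
    apply Rabs_def2 in H. lra. }
  assert (Hclose : mu y - r y * green r t y < eps).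
  { pose proof (expect_stopped_one r t) as Hone. unfold expect_stopped in Hone.
    rewrite (zpart_ext _ (fun z => r z * green r t z + survive r t z)) in Hone
      by (intros; rewrite law_stopped_green; ring).
    rewrite zpart_plus in Hone.
    assert (zpart (survive r t) t <= tail r t).
    { apply zpart_le. intros z _. unfold survive. pose proof (stop_rate_01 z).
      pose proof (alive_ge0 r stop_rate_01 t z). nra. }
    assert (mu y - r y * green r t y <= zpart (fun z => mu z - r z * green r t z) t).
    { apply (zpart_ge_term (fun z => mu z - r z * green r t z)); [|unfold t; lia].
      intros z. pose proof (Hle t z). lra. }
    rewrite zpart_minus in *. pose proof (mu_mass_le t). lra. }
  exists t. intros n Hn. unfold R_dist. rewrite stopped_sum_green.
  assert (green r t y <= green r n y) by (apply sum_f_R0_le_mono; [intros; apply alive_ge0, stop_rate_01|lia]).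
  assert (r y * green r t y <= r y * green r n y) by (apply Rmult_le_compat_l; [apply stop_rate_01|auto]).
  pose proof (Hle n y). rewrite Rabs_left1 by lra. lra.
Qed.

(* On {|a| >= 2K}, |a| is dominated by |a - K| + |a + K| - 2K, whose expectation is at most
   U K + U (-K) - 2K by optional stopping. *)
Lemma stop_rate_UI : UI_stopped r.
Proof.
  intros eps Heps. destruct (U_pair_tail eps Heps) as [K HK].
  exists (2 * INR K). intros t.
  apply Rle_trans with (expect_stopped r t (fun y => dist y (Z.of_nat K))
                        + expect_stopped r t (fun y => dist y (- Z.of_nat K))
                        - 2 * INR K * expect_stopped r t (fun _ => 1)).
  - unfold expect_stopped, ui_tail.
    rewrite <- zpart_scal, <- zpart_plus, <- zpart_minus. apply zpart_le. intros y _.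
    pose proof (law_stopped_ge0 r stop_rate_01 t y) as Hls.
    replace (law_stopped r t y * dist y (Z.of_nat K) + law_stopped r t y * dist y (- Z.of_nat K)
             - 2 * INR K * (law_stopped r t y * 1))
      with (law_stopped r t y * (Rabs (IZR y - INR K) + Rabs (IZR y + INR K) - 2 * INR K))
      by (rewrite <- dist_nat_pm; ring).
    destruct (Rle_dec (2 * INR K) (Rabs (IZR y))) as [Hfar|Hnear].
    + pose proof (abs_pair_large (IZR y) (INR K) Hfar). rewrite Rmult_comm. nra.
    + pose proof (abs_pair_ge0 (IZR y) (INR K)). nra.
  - rewrite expect_stopped_one.
    pose proof (expect_stopped_dist_le t (Z.of_nat K)).
    pose proof (expect_stopped_dist_le t (- Z.of_nat K)). lra.
Qed.

End Construction.

Theorem theorem1 (mu : Z -> R) :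
  M0 mu ->
  exists r : Z -> R,
    (forall x, 0 <= r x <= 1) /\
    finite_as r /\
    (forall y, law_Stau r y (mu y)) /\
    UI_stopped r.
Proof.
  intros [mu_ge0 [mu_mass [[m mu_moment] mu_mean]]].
  destruct (potential_exists mu m mu_ge0 mu_mass mu_moment) as [U U_cv].
  pose proof (zpart_mass_le mu mu_ge0 mu_mass) as mu_mass_le.
  pose proof (potential_ge_abs mu mu_ge0 mu_mass mu_mean U U_cv) as U_ge_abs.
  pose proof (potential_laplacian mu U U_cv) as U_laplacian.
  pose proof (potential_pair_tail mu m mu_ge0 mu_mass mu_moment U U_cv) as U_pair_tail.
  exists (stop_rate mu U). split; [|split; [|split]].
  - intros x. apply stop_rate_01; assumption.
  - apply stop_rate_finite_as; assumption.
  - intros y. apply stop_rate_law; assumption.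
  - apply stop_rate_UI; assumption.
Qed.
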